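(* Let $\mathcal{G}$ be a connected simple undirected graph on $N$ nodes with Laplacian $L\in\mathbb{R}^{N\times N}$. Consider the system $\dot x(t)=u(t)$, $x(0)=x_0\in\mathbb{R}^N$, and the cost functional $$J(x_0,u)=\int_0^\infty x^\top(t)Qx(t)+u^\top(t)Ru(t)\,dt,$$ where $Q\in\mathbb{R}^{N\times N}$ is symmetric with $Q\ge 0$ and $R\in\mathbb{R}^{N\times N}$ is symmetric with $R>0$. Suppose that $J(x_0,u)<\infty$ for all $x_0\in\mathbb{R}^N$ and all control laws of the form $u=-gLx$ with $g>0$. Then there exists a symmetric positive semi-definite matrix $W\in\mathbb{R}^{N\times N}$ such that $Q=LWL$.
   Context: For a graph with node set $\{1,\dots,N\}$, the adjacency matrix is $A=[a_{ij}]$ with $a_{ij}=1$ if $(j,i)$ is an edge and $a_{ij}=0$ otherwise; the degree matrix is $D=\mathrm{diag}(d_1,\dots,d_N)$ with $d_i=\sum_j a_{ij}$; the Laplacian is $L=D-A$. The graph is simple (no self-loops), undirected (so $L$ is symmetric) and connected. *)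

(* Vectors in R^N are functions nat -> R (only indices < N matter);
   N x N matrices are functions nat -> nat -> R (only indices < N matter). *)
From Stdlib Require Import Reals Relations.
Open Scope R_scope.

Definition vec := nat -> R.
Definition mat := nat -> nat -> R.

Fixpoint sumN (n : nat) (f : nat -> R) : R :=
  match n with
  | O => 0
  | S m => sumN m f + f m
  end.

Definition mulmv (N : nat) (A : mat) (v : vec) : vec :=
  fun i => sumN N (fun j => A i j * v j).

Definition mulmm (N : nat) (A B : mat) : mat :=
  fun i j => sumN N (fun k => A i k * B k j).

Definition quad (N : nat) (A : mat) (v : vec) : R :=
  sumN N (fun i => sumN N (fun j => v i * A i j * v j)).

Definition symmetric_mat (N : nat) (A : mat) : Prop :=
  forall i j, (i < N)%nat -> (j < N)%nat -> A i j = A j i.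

Definition psd (N : nat) (A : mat) : Prop :=
  symmetric_mat N A /\ forall v : vec, 0 <= quad N A v.

Definition nonzero_vec (N : nat) (v : vec) : Prop :=
  exists i, (i < N)%nat /\ v i <> 0.

Definition pd (N : nat) (A : mat) : Prop :=
  symmetric_mat N A /\ forall v : vec, nonzero_vec N v -> 0 < quad N A v.

Definition simple_undirected (N : nat) (adj : nat -> nat -> bool) : Prop :=
  (forall i, (i < N)%nat -> adj i i = false) /\
  (forall i j, (i < N)%nat -> (j < N)%nat -> adj i j = adj j i).

Definition edge_in (N : nat) (adj : nat -> nat -> bool) (i j : nat) : Prop :=
  (i < N)%nat /\ (j < N)%nat /\ adj i j = true.

Definition connected (N : nat) (adj : nat -> nat -> bool) : Prop :=
  forall i j, (i < N)%nat -> (j < N)%nat ->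
    clos_refl_trans nat (edge_in N adj) i j.

Definition adjmat (adj : nat -> nat -> bool) : mat :=
  fun i j => if adj j i then 1 else 0.

Definition degree (N : nat) (adj : nat -> nat -> bool) (i : nat) : R :=
  sumN N (fun j => adjmat adj i j).

Definition laplacian (N : nat) (adj : nat -> nat -> bool) : mat :=
  fun i j => (if Nat.eqb i j then degree N adj i else 0) - adjmat adj i j.

Definition closed_loop_traj (N : nat) (L : mat) (g : R) (x0 : vec)
  (x : R -> vec) : Prop :=
  (forall i, (i < N)%nat -> x 0 i = x0 i) /\
  (forall i t, (i < N)%nat ->
     derivable_pt_lim (fun s => x s i) t (- g * mulmv N L (x t) i)).

Definition improper_integral_finite (f : R -> R) : Prop :=
  exists l : R, forall eps : R, eps > 0 ->
    exists T0 : R, forall (T : R) (pr : Riemann_integrable f 0 T),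
      T0 <= T -> Rabs (RiemannInt pr - l) < eps.

Definition cost_finite (N : nat) (Q Rm L : mat) (g : R) (x : R -> vec) : Prop :=
  improper_integral_finite
    (fun t => quad N Q (x t) + quad N Rm (fun i => - g * mulmv N L (x t) i)).

(* The proof has an analytic half and an algebraic half.
   - Analysis: the consensus vector 1 is an equilibrium of  x' = -g L x  because
     L 1 = 0, so along the constant trajectory x = 1 the cost integrand is the
     constant  1^T Q 1.  A constant with a finite improper integral is 0, hence
     1^T Q 1 = 0 and, Q being positive semi-definite, Q 1 = 0.
   - Algebra: for a connected graph, ker L = span 1.  With the averaging matrix
     J = 1 1^T / N the matrix L + J is invertible, and its inverse M satisfies
     L M = M L = I - J.  For symmetric Q with Q 1 = 0 we get J Q = Q J = 0, so
     W := M Q M satisfies  L W L = (I - J) Q (I - J) = Q, and W is positive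
     semi-definite as a congruence of Q. *)
From Stdlib Require Import Reals Lra Relations.
Open Scope R_scope.

(* A constant function whose improper integral over [0, oo) converges is 0:
   otherwise the integrals over [0, T] drift apart linearly in T. *)
Lemma const_integral_finite_eq0 (c : R) :
  improper_integral_finite (fun _ => c) -> c = 0.
Proof.
intros [l Hl]; destruct (Req_dec c 0) as [| Hc]; [assumption | exfalso].
destruct (Hl (1/2)) as [T0 HT]; [lra |].
assert (Hpos : 0 < Rabs c) by (apply Rabs_pos_lt; exact Hc).
assert (Hshift : 0 < 1 / Rabs c) by (apply Rdiv_lt_0_compat; lra).
pose proof (HT T0 (RiemannInt_P14 0 T0 c) (Rle_refl _)) as Hnear0.
pose proof (HT (T0 + 1 / Rabs c) (RiemannInt_P14 0 _ c) ltac:(lra)) as Hnear1.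
pose proof (RiemannInt_P15 (RiemannInt_P14 0 T0 c)) as I0.
pose proof (RiemannInt_P15 (RiemannInt_P14 0 (T0 + 1 / Rabs c) c)) as I1.
unfold fct_cte in I0, I1; rewrite I0 in Hnear0; rewrite I1 in Hnear1.
assert (Hgap : Rabs (c * (T0 + 1 / Rabs c - 0) - l - (c * (T0 - 0) - l)) = 1).
{ replace (c * (T0 + 1 / Rabs c - 0) - l - (c * (T0 - 0) - l)) with (c / Rabs c)
    by (field; lra).
  unfold Rdiv; rewrite Rabs_mult, Rabs_inv, Rabs_Rabsolu; field; lra. }
set (d1 := c * (T0 + 1 / Rabs c - 0) - l) in *; set (d0 := c * (T0 - 0) - l) in *.
pose proof (Rabs_triang d1 (- d0)) as Htri; rewrite Rabs_Ropp in Htri.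
change (d1 - d0) with (d1 + - d0) in Hgap; lra.
Qed.

From mathcomp Require Import all_boot all_order all_algebra.
From mathcomp Require Import ring lra Rstruct.
Import Order.TTheory GRing.Theory Num.Theory.
Set Implicit Arguments. Unset Strict Implicit. Unset Printing Implicit Defensive.
Local Open Scope ring_scope.

Section QuadraticForms.
Variable F : realFieldType.

Definition qf n (A : 'M[F]_n) (u : 'cV[F]_n) : F := (u^T *m A *m u) 0 0.

Lemma qf0 n (A : 'M[F]_n) : qf A 0 = 0.
Proof. by rewrite /qf mulmx0 mxE. Qed.

Lemma qf_congruence n (P A : 'M[F]_n) u : qf (P^T *m A *m P) u = qf A (P *m u).
Proof. by rewrite /qf trmx_mul !mulmxA. Qed.

Lemma bilinear_sym n (A : 'M[F]_n) (x y : 'cV[F]_n) :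
  A^T = A -> (x^T *m A *m y) 0 0 = (y^T *m A *m x) 0 0.
Proof.
move=> Asym; have -> : (y^T *m A *m x) 0 0 = (y^T *m A *m x)^T 0 0 by rewrite [RHS]mxE.
by rewrite !trmx_mul trmxK Asym mulmxA.
Qed.

Lemma nonneg_quadratic_linear_coef (a c : F) :
  0 <= c -> (forall s, 0 <= s * a + s * a + s * s * c) -> a = 0.
Proof.
move=> c_ge0 Hs; have c1_gt0 : 0 < c + 1 by lra.
have := Hs (- a / (c + 1)).
have -> : - a / (c + 1) * a + - a / (c + 1) * a + - a / (c + 1) * (- a / (c + 1)) * c
          = - (a * a) * (c + 2) / ((c + 1) * (c + 1)) by field; rewrite gt_eqF.
rewrite pmulr_lge0 ?invr_gt0 ?mulr_gt0 //; nra.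
Qed.

(* An isotropic vector of a positive semi-definite symmetric form lies in its
   kernel: expand  qf A (u + s A u) >= 0  in s. *)
Lemma psd_isotropic_kernel n (A : 'M[F]_n) (u : 'cV[F]_n) :
  A^T = A -> (forall w, 0 <= qf A w) -> qf A u = 0 -> A *m u = 0.
Proof.
move=> Asym Apsd Au0; set w := A *m u.
have expand s : qf A (u + s *: w) =
    qf A u + s * (w^T *m w) 0 0 + s * (w^T *m w) 0 0 + s * s * qf A w.
  rewrite /qf [(u + _)^T]linearD /= [(s *: w)^T]linearZ /=.
  rewrite !mulmxDl !mulmxDr -!scalemxAl -!scalemxAr scalerA.
  rewrite ![((_ + _ : 'M[F]_1)) 0 0]mxE ![((_ *: _ : 'M[F]_1)) 0 0]mxE.
  by rewrite (bilinear_sym u w Asym) -[w^T *m A *m u]mulmxA -/w !addrA.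
have sqnorm0 : (w^T *m w) 0 0 = 0.
  apply: (nonneg_quadratic_linear_coef (Apsd w)) => s.
  by have := Apsd (u + s *: w); rewrite expand Au0 add0r.
have square k : w^T 0 k * w k 0 = w k 0 ^+ 2 by rewrite mxE expr2.
move: sqnorm0; rewrite [LHS]mxE; under eq_bigr do rewrite square.
move=> /psumr_eq0P sq_eq0; apply/matrixP => i j; rewrite (ord1 j) [RHS]mxE.
by apply/eqP; rewrite -sqrf_eq0 sq_eq0 // => k _; apply: sqr_ge0.
Qed.

End QuadraticForms.

Section Averaging.
Variables (F : realFieldType) (n : nat).

Definition ones : 'cV[F]_n.+1 := const_mx 1.

Definition avg : 'M[F]_n.+1 := ones *m (n.+1%:R^-1 *: ones^T).

Lemma ones_dot_ones : ones^T *m ones = n.+1%:R%:M.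
Proof.
apply/matrixP => i j; rewrite (ord1 i) (ord1 j) !mxE /=.
by under eq_bigr do rewrite !mxE mulr1; rewrite sumr_const card_ord.
Qed.

Lemma avg_ones : avg *m ones = ones.
Proof.
by rewrite /avg -mulmxA -scalemxAl ones_dot_ones scale_scalar_mx mulVf ?pnatr_eq0 ?mulmx1.
Qed.

Lemma avg_sym : avg^T = avg.
Proof. by rewrite /avg trmx_mul linearZ /= trmxK -scalemxAl scalemxAr. Qed.

Lemma avg_idem : avg *m avg = avg.
Proof. by rewrite {2}/avg mulmxA avg_ones. Qed.

Lemma avg_mull p (X : 'M[F]_(n.+1, p)) : ones^T *m X = 0 -> avg *m X = 0.
Proof. by move=> X1; rewrite /avg -mulmxA -scalemxAl X1 scaler0 mulmx0. Qed.

Lemma avg_mulr p (X : 'M[F]_(p, n.+1)) : X *m ones = 0 -> X *m avg = 0.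
Proof. by move=> X1; rewrite /avg mulmxA X1 mul0mx. Qed.

Lemma avg_annihilates (X : 'M[F]_n.+1) :
  X^T = X -> X *m ones = 0 -> X *m avg = 0 /\ avg *m X = 0.
Proof.
move=> Xsym X1; split; first exact: avg_mulr.
by apply: avg_mull; rewrite -[_ *m X]trmxK trmx_mul trmxK Xsym X1 trmx0.
Qed.

End Averaging.
Arguments ones {F n}.
Arguments avg {F n}.

Section ShiftedLaplacian.
Variables (F : realFieldType) (n : nat) (L : 'M[F]_n.+1).
Local Notation J := (@avg F n).
Local Notation one := (@ones F n).
Hypotheses (Lsym : L^T = L) (L_ones : L *m one = 0)
  (Lker : forall v : 'cV[F]_n.+1, L *m v = 0 -> exists c, forall i, v i 0 = c).

(* Adding J removes the kernel of L: on 1^T v = 0, J vanishes and L is injective. *)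
Lemma shifted_lap_injective (v : 'cV[F]_n.+1) : (L + J) *m v = 0 -> v = 0.
Proof.
move=> Av0.
have onesL : one^T *m L = 0 by rewrite -[_ *m L]trmxK trmx_mul trmxK Lsym L_ones trmx0.
have ones_avg : one^T *m J = one^T.
  by rewrite -[one^T *m J]trmxK trmx_mul trmxK avg_sym avg_ones.
have ones_v : one^T *m v = 0.
  by rewrite -ones_avg -[one^T *m J]add0r -onesL -mulmxDr -mulmxA Av0 mulmx0.
have [c vc] : exists c, forall i, v i 0 = c.
  by apply: Lker; move: Av0; rewrite mulmxDl avg_mull // addr0.
have : (one^T *m v) 0 0 = c * n.+1%:R.
  rewrite mxE; under eq_bigr do rewrite !mxE vc mul1r.
  by rewrite sumr_const card_ord mulr_natr.
rewrite ones_v mxE => /esym/eqP; rewrite mulf_eq0 pnatr_eq0 orbF => /eqP c0.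
by apply/matrixP => i j; rewrite (ord1 j) vc c0 mxE.
Qed.

Lemma shifted_lap_unit : L + J \in unitmx.
Proof.
rewrite -unitmx_tr -row_free_unit; apply: inj_row_free => v vA0.
apply: trmx_inj; rewrite trmx0; apply: shifted_lap_injective.
by rewrite -[L + J]trmxK -trmx_mul vA0 trmx0.
Qed.

Definition lap_pinv : 'M[F]_n.+1 := invmx (L + J).

Lemma lap_pinv_sym : lap_pinv^T = lap_pinv.
Proof. by rewrite /lap_pinv trmx_inv linearD /= Lsym avg_sym. Qed.

Lemma lap_pinv_mul : L *m lap_pinv = 1%:M - J /\ lap_pinv *m L = 1%:M - J.
Proof.
have [L_avg avg_L] := avg_annihilates Lsym L_ones.
have avgA : J *m (L + J) = J by rewrite mulmxDr avg_L avg_idem add0r.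
have Aavg : (L + J) *m J = J by rewrite mulmxDl L_avg avg_idem add0r.
have Lshift : L = (L + J) - J by rewrite addrK.
have unitA := shifted_lap_unit.
rewrite /lap_pinv; split.
- by rewrite {1}Lshift mulmxBl mulmxV // -{1}avgA mulmxK.
- by rewrite {2}Lshift mulmxBr mulVmx // -{2}Aavg mulKmx.
Qed.

Lemma lap_factorization (Q : 'M[F]_n.+1) :
  Q^T = Q -> Q *m one = 0 -> L *m (lap_pinv *m Q *m lap_pinv) *m L = Q.
Proof.
move=> Qsym Q_ones; have [Q_avg avg_Q] := avg_annihilates Qsym Q_ones.
have [L_M M_L] := lap_pinv_mul.
rewrite -!mulmxA M_L !mulmxA L_M mulmxBl mul1mx avg_Q subr0.
by rewrite mulmxBr mulmx1 Q_avg subr0.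
Qed.

Lemma lap_pinv_congruence_psd (Q : 'M[F]_n.+1) :
  Q^T = Q -> (forall u, 0 <= qf Q u) ->
  (lap_pinv *m Q *m lap_pinv)^T = lap_pinv *m Q *m lap_pinv /\
  forall u, 0 <= qf (lap_pinv *m Q *m lap_pinv) u.
Proof.
move=> Qsym Qpsd; split; first by rewrite !trmx_mul lap_pinv_sym Qsym mulmxA.
by move=> u; rewrite -{1}lap_pinv_sym qf_congruence.
Qed.

End ShiftedLaplacian.

Lemma sumN_big n f : sumN n f = \sum_(i < n) f i.
Proof. by elim: n => [|n IH] /=; rewrite ?big_ord0 // big_ord_recr /= IH. Qed.

Definition mx n (A : mat) : 'M[R]_n := \matrix_(i < n, j < n) A i j.
Definition cv n (v : vec) : 'cV[R]_n := \col_(i < n) v i.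
(* Read back a MathComp matrix as an index function (indices >= N are clamped). *)
Definition mat_of n (W : 'M[R]_n.+1) : mat := fun i j => W (inord i) (inord j).

Lemma quad_qf n A v : quad n A v = qf (mx n A) (cv n v).
Proof.
rewrite /quad /qf sumN_big mxE; under eq_bigr do rewrite sumN_big.
under [RHS]eq_bigr => j _ do (rewrite !mxE; under eq_bigr => k _ do rewrite !mxE).
under [RHS]eq_bigr => j _ do rewrite mulr_suml.
by rewrite [RHS]exchange_big.
Qed.

Lemma mx_mulmm n A B : mx n (mulmm n A B) = mx n A *m mx n B.
Proof.
apply/matrixP => i j; rewrite !mxE /mulmm sumN_big.
by apply: eq_bigr => k _; rewrite !mxE.
Qed.

Lemma mulmv_mx n A v i : (i < n.+1)%N ->
  mulmv n.+1 A v i = (mx n.+1 A *m cv n.+1 v) (inord i) 0.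
Proof.
move=> ltin; rewrite /mulmv sumN_big mxE.
by apply: eq_bigr => k _; rewrite !mxE inordK.
Qed.

Lemma mx_entry n A i j : (i < n.+1)%N -> (j < n.+1)%N ->
  A i j = mx n.+1 A (inord i) (inord j).
Proof. by move=> ltin ltjn; rewrite mxE !inordK. Qed.

Lemma mx_mat_of n (W : 'M[R]_n.+1) : mx n.+1 (mat_of W) = W.
Proof. by apply/matrixP => i j; rewrite !mxE /mat_of !inord_val. Qed.

Lemma cv_ones n : cv n.+1 (fun _ => 1) = ones.
Proof. by apply/matrixP => i j; rewrite !mxE. Qed.

Lemma psd_mx n A :
  psd n.+1 A -> (mx n.+1 A)^T = mx n.+1 A /\ forall u, 0 <= qf (mx n.+1 A) u.
Proof.
move=> [Asym Apsd]; split.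
  by apply/matrixP => i j; rewrite !mxE; apply: Asym; apply/ssrnat.ltP.
move=> u; have := Apsd (fun k => u (inord k) 0); rewrite quad_qf => /RleP.
suff -> : cv n.+1 (fun k => u (inord k) 0) = u by [].
by apply/matrixP => i j; rewrite !mxE inord_val (ord1 j).
Qed.

Lemma psd_mat_of n (W : 'M[R]_n.+1) :
  W^T = W -> (forall u, 0 <= qf W u) -> psd n.+1 (mat_of W).
Proof.
move=> Wsym Wpsd; split=> [i j _ _ | v]; last by rewrite quad_qf mx_mat_of; apply/RleP.
by rewrite /mat_of -[in LHS]Wsym mxE.
Qed.

Section Laplacian.
Variables (n : nat) (adj : nat -> nat -> bool).
Hypothesis Hsimple : simple_undirected n.+1 adj.
Local Notation Lap := (mx n.+1 (laplacian n.+1 adj)).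

Lemma lap_row (v : 'cV[R]_n.+1) i :
  (Lap *m v) i 0 = \sum_(j < n.+1) adjmat adj i j * (v i 0 - v j 0).
Proof.
rewrite mxE; under eq_bigr do rewrite mxE /laplacian mulrBl.
under [RHS]eq_bigr do rewrite mulrBr.
rewrite !sumrB; congr (_ - _).
rewrite (bigD1 i) //= big1 ?addr0 => [|j /eqP neq_ji]; last first.
  have -> : Nat.eqb i j = false by apply/Nat.eqb_neq => /ord_inj /esym.
  by rewrite mul0r.
by rewrite Nat.eqb_refl /degree sumN_big -mulr_suml.
Qed.

Lemma lap_ones : Lap *m ones = 0.
Proof.
apply/matrixP => i j; rewrite (ord1 j) lap_row [RHS]mxE big1 // => k _.
by rewrite !mxE subrr mulr0.
Qed.

Lemma lap_sym : Lap^T = Lap.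
Proof.
have [_ adj_sym] := Hsimple.
apply/matrixP => i j; rewrite !mxE /laplacian /adjmat.
rewrite (adj_sym i j (ssrnat.ltP (ltn_ord i)) (ssrnat.ltP (ltn_ord j))).
case: (Nat.eqb_spec j i) => [/ord_inj -> | neq_ji]; first by rewrite Nat.eqb_refl.
by have -> : Nat.eqb i j = false by apply/Nat.eqb_neq => eq_ij; apply: neq_ji.
Qed.

Lemma lap_harmonic_max (v : 'cV[R]_n.+1) (x y : 'I_n.+1) :
  Lap *m v = 0 -> (forall j, v j 0 <= v x 0) -> adj x y -> v y 0 = v x 0.
Proof.
move=> harmonic vmax adj_xy.
have terms_ge0 (j : 'I_n.+1) : true -> 0 <= adjmat adj x j * (v x 0 - v j 0).
  move=> _; rewrite mulr_ge0 ?subr_ge0 //.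
  by rewrite /adjmat; case: (adj j x).
have := lap_row v x; rewrite harmonic mxE => /esym/(psumr_eq0P terms_ge0)/(_ y erefl).
have -> : adjmat adj x y = 1.
  by rewrite /adjmat (proj2 Hsimple y x) ?adj_xy //; apply/ssrnat.ltP.
by rewrite mul1r => /eqP; rewrite subr_eq0 => /eqP.
Qed.

Hypothesis Hconn : connected n.+1 adj.

Lemma lap_ker (v : 'cV[R]_n.+1) : Lap *m v = 0 -> exists c, forall i, v i 0 = c.
Proof.
move=> harmonic.
case: (@arg_maxP _ _ _ ord0 predT (fun i => v i 0) erefl) => i0 _ vmax.
exists (v i0 0) => k.
have spread a b : clos_refl_trans nat (edge_in n.+1 adj) a b ->
    v (inord a) 0 = v i0 0 -> v (inord b) 0 = v i0 0.
  elim=> {a b} [a b [lt_an [lt_bn adj_ab]] | // | a b c _ IHab _ IHbc].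
    2: by move/IHab/IHbc.
  have lt_a : (a < n.+1)%N by apply/ssrnat.ltP.
  have lt_b : (b < n.+1)%N by apply/ssrnat.ltP.
  move=> va; rewrite (@lap_harmonic_max v (inord a)) // => [j | ].
    by rewrite va; apply: vmax.
  by rewrite !inordK.
rewrite -[k]inord_val; apply: (spread i0); last by rewrite inord_val.
by apply: Hconn; apply/ssrnat.ltP.
Qed.

End Laplacian.

Close Scope ring_scope.
Open Scope R_scope.

Lemma consensus_equilibrium n adj g :
  closed_loop_traj n.+1 (laplacian n.+1 adj) g (fun _ => 1) (fun _ _ => 1).
Proof.
split=> [// | i t lt_in].
rewrite mulmv_mx; last by apply/ssrnat.ltP.
by rewrite cv_ones lap_ones mxE Rmult_0_r; apply: derivable_pt_lim_const.
Qed.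

(* Along the consensus equilibrium the control vanishes, so a finite cost
   forces the constant state cost 1^T Q 1 to vanish. *)
Lemma consensus_cost_vanishes n adj Q Rm :
  cost_finite n.+1 Q Rm (laplacian n.+1 adj) 1 (fun _ _ => 1) ->
  quad n.+1 Q (fun _ => 1) = 0.
Proof.
move=> /const_integral_finite_eq0.
suff -> : quad n.+1 Rm (fun i => - 1 * mulmv n.+1 (laplacian n.+1 adj) (fun _ => 1) i) = 0.
  by rewrite Rplus_0_r.
rewrite quad_qf.
suff -> : cv n.+1 (fun i => - 1 * mulmv n.+1 (laplacian n.+1 adj) (fun _ => 1) i) = 0%R.
  exact: qf0.
apply/matrixP => i j; rewrite !mxE mulmv_mx ?ltn_ord // inord_val.
by rewrite cv_ones lap_ones mxE Rmult_0_r.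
Qed.

Theorem lemma1 (N : nat) (adj : nat -> nat -> bool) (Q Rm : mat)
  (Hsimple : simple_undirected N adj)
  (Hconn : connected N adj)
  (HQ : psd N Q)
  (HR : pd N Rm)
  (Hfin : forall (g : R) (x0 : vec) (x : R -> vec),
      0 < g -> closed_loop_traj N (laplacian N adj) g x0 x ->
      cost_finite N Q Rm (laplacian N adj) g x) :
  exists W : mat, psd N W /\
    forall i j, (i < N)%coq_nat -> (j < N)%coq_nat ->
      Q i j = mulmm N (mulmm N (laplacian N adj) W) (laplacian N adj) i j.
Proof.
case: N Hsimple Hconn HQ HR Hfin => [|n] Hsimple Hconn HQ _ Hfin.
  exists (fun _ _ => 0); split; last by move=> i j /Nat.nlt_0_r.
  by split=> [i j /Nat.nlt_0_r [] | v]; rewrite /quad /=; apply: Rle_refl.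
set Lap := mx n.+1 (laplacian n.+1 adj).
have [Qsym Qpsd] := psd_mx HQ.
have cost0 := consensus_cost_vanishes (Hfin 1 _ _ Rlt_0_1 (consensus_equilibrium n adj 1)).
have Q_ones : (mx n.+1 Q *m ones = 0)%R.
  by apply: psd_isotropic_kernel => //; rewrite -cv_ones -quad_qf.
have [Wsym Wpsd] := lap_pinv_congruence_psd (lap_sym Hsimple) Qsym Qpsd.
exists (mat_of (lap_pinv Lap *m mx n.+1 Q *m lap_pinv Lap)); split.
  exact: psd_mat_of.
move=> i j /ssrnat.ltP lt_in /ssrnat.ltP lt_jn.
rewrite (mx_entry (n := n) Q) // (mx_entry (n := n) (mulmm _ _ _)) // !mx_mulmm mx_mat_of.
by rewrite (lap_factorization (lap_sym Hsimple) (lap_ones n adj) (lap_ker Hsimple Hconn)).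
Qed.
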